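(* For every real $x$ the following series representations hold (each series converging): $$\operatorname{erf}(x)=\frac{x}{\sqrt{\pi}}+\frac{x}{\sqrt{\pi}}e^{-x^2}+\frac{x^3}{\sqrt{\pi}}\sum_{k=0}^{\infty}\frac{(-1)^k(2k+1)x^{2k}}{(2k+3)(k+1)!};$$ $$\operatorname{erf}(x)=\frac{x}{\sqrt{\pi}}+\frac{x}{\sqrt{\pi}}\Big[1+\frac{x^2}{3}\Big]e^{-x^2}+\frac{x^5}{6\sqrt{\pi}}\sum_{k=0}^{\infty}\frac{(-1)^k(2k+1)(k+1)!\,x^{2k}}{(2k+5)\prod_{r=1}^{k}\Big[\sum_{i=1}^{r}(2i+1)\Big]};$$ $$\operatorname{erf}(x)=\frac{x}{\sqrt{\pi}}\Big[1-\frac{x^2}{30}\Big]+\frac{x}{\sqrt{\pi}}\Big[1+\frac{11x^2}{30}+\frac{x^4}{15}\Big]e^{-x^2}+\frac{x^7}{60\sqrt{\pi}}\sum_{k=0}^{\infty}\frac{(-1)^k(2k+1)(2k+3)(k+1)!\,x^{2k}}{3(2k+7)\prod_{r=2}^{k+1}\Big[2\sum_{i=2}^{r}i\Big]},$$ where empty products equal $1$.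
   Context: $\operatorname{erf}(x)=\frac{2}{\sqrt{\pi}}\int_0^x e^{-\lambda^2}\,d\lambda$. *)

From Stdlib Require Import Reals List Factorial.
From Coquelicot Require Import Coquelicot.
Open Scope R_scope.

Definition erf (x : R) : R :=
  2 / sqrt PI * RInt (fun l => exp (- l ^ 2)) 0 x.

(* finite product / sum over the integer range r = m..n (empty if n < m) *)
Definition prodR (m n : nat) (f : nat -> R) : R :=
  fold_right (fun r acc => f r * acc) 1 (seq m (S n - m)).
Definition sumR (m n : nat) (f : nat -> R) : R :=
  fold_right (fun r acc => f r + acc) 0 (seq m (S n - m)).

Definition erf_series1 (x : R) (k : nat) : R :=
  (-1) ^ k * (2 * INR k + 1) * x ^ (2 * k)
  / ((2 * INR k + 3) * INR (fact (k + 1))).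

Definition erf_series2 (x : R) (k : nat) : R :=
  (-1) ^ k * (2 * INR k + 1) * INR (fact (k + 1)) * x ^ (2 * k)
  / ((2 * INR k + 5) * prodR 1 k (fun r => sumR 1 r (fun i => 2 * INR i + 1))).

Definition erf_series3 (x : R) (k : nat) : R :=
  (-1) ^ k * (2 * INR k + 1) * (2 * INR k + 3) * INR (fact (k + 1)) * x ^ (2 * k)
  / (3 * (2 * INR k + 7) * prodR 2 (k + 1) (fun r => 2 * sumR 2 r (fun i => INR i))).

From Stdlib Require Import Reals Lra Lia List Factorial.
From Coquelicot Require Import Coquelicot.
Open Scope R_scope.

(* Put y = x^2, P(y) = sum_n (-1)^n y^n / (n! (2n+1)) and E(y) = e^(-y) = sum_n (-1)^n y^n / n!.
   The function t P(t^2) is a primitive of e^(-t^2), since its derivative is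
   P(y) + 2 y P'(y) = sum_n (2n+1) (-1)^n y^n / (n! (2n+1)) = E(y); hence erf x = 2 x P(y) / sqrt PI.
   For a quadratic q the power series 2 P(y) - q(y) E(y) has explicit coefficients; splitting off
   its first m terms leaves y^m times a power series which, once the products in the statement are
   evaluated as k! (k+2)! / 2 and k! (k+3)! / 6, is the series of the statement.  The three
   identities are the cases q = 1, 1 + y/3 and 1 + 11y/30 + y^2/15, with m = 1, 2, 3. *)

Definition erf_coef (n : nat) : R := (-1) ^ n / (INR (fact n) * (2 * INR n + 1)).
Definition exp_neg_coef (n : nat) : R := (-1) ^ n / INR (fact n).

Lemma is_pseries_exp_neg (y : R) : is_pseries exp_neg_coef y (exp (- y)).
Proof.
  apply is_pseries_R.
  apply (is_series_ext (fun n => / INR (fact n) * (- y) ^ n)).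
  - intros n. change (/ INR (fact n) * (- y) ^ n = exp_neg_coef n * y ^ n).
    unfold exp_neg_coef. replace (- y) with (-1 * y) by ring.
    rewrite Rpow_mult_distr. unfold Rdiv. ring.
  - apply is_pseries_R, is_exp_Reals.
Qed.

Lemma erf_coef_neq_0 (n : nat) : erf_coef n <> 0.
Proof.
  pose proof (pos_INR n). pose proof (INR_fact_neq_0 n).
  unfold erf_coef, Rdiv. apply Rmult_integral_contrapositive_currified.
  - apply pow_nonzero; lra.
  - apply Rinv_neq_0_compat, Rmult_integral_contrapositive_currified; lra.
Qed.

Lemma erf_coef_ratio (n : nat) :
  erf_coef (S n) / erf_coef n = - ((2 * INR n + 1) / ((INR n + 1) * (2 * INR n + 3))).
Proof.
  pose proof (pos_INR n). pose proof (INR_fact_neq_0 n).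
  unfold erf_coef. rewrite fact_simpl, mult_INR, S_INR. simpl pow.
  field. repeat split; try lra. apply pow_nonzero; lra.
Qed.

Lemma CV_radius_erf_coef : CV_radius erf_coef = p_infty.
Proof.
  apply CV_radius_infinite_DAlembert; [exact erf_coef_neq_0|].
  apply is_lim_seq_le_le with (u := fun _ => 0) (w := fun n => / INR (S n)).
  - intros n. pose proof (pos_INR n).
    rewrite erf_coef_ratio, Rabs_Ropp, Rabs_pos_eq, S_INR.
    + split.
      * apply Rdiv_le_0_compat; [lra|]. apply Rmult_lt_0_compat; lra.
      * apply (Rmult_le_reg_l ((INR n + 1) * (2 * INR n + 3))); [apply Rmult_lt_0_compat; lra|].
        field_simplify; lra.
    + apply Rdiv_le_0_compat; [lra|]. apply Rmult_lt_0_compat; lra.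
  - apply is_lim_seq_const.
  - apply (is_lim_seq_incr_1 (fun n => / INR n)).
    replace (Finite 0) with (Rbar_inv p_infty) by reflexivity.
    apply is_lim_seq_inv; [apply is_lim_seq_INR | discriminate].
Qed.

Lemma ex_pseries_erf_coef (y : R) : ex_pseries erf_coef y.
Proof. apply CV_radius_inside. rewrite CV_radius_erf_coef. exact I. Qed.

Lemma erf_coef_derive (n : nat) :
  erf_coef n + 2 * PS_incr_1 (PS_derive erf_coef) n = exp_neg_coef n.
Proof.
  destruct n as [|m].
  - change (erf_coef 0 + 2 * 0 = exp_neg_coef 0).
    unfold erf_coef, exp_neg_coef. simpl. field.
  - pose proof (pos_INR m). pose proof (INR_fact_neq_0 (S m)).
    change (erf_coef (S m) + 2 * (INR (S m) * erf_coef (S m)) = exp_neg_coef (S m)).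
    unfold erf_coef, exp_neg_coef. rewrite S_INR. field. lra.
Qed.

Lemma PSeries_erf_coef_derive (y : R) :
  PSeries erf_coef y + 2 * (y * PSeries (PS_derive erf_coef) y) = exp (- y).
Proof.
  rewrite <- (is_pseries_unique _ _ _ (is_pseries_exp_neg y)).
  symmetry. apply is_pseries_unique.
  apply (is_pseries_ext _ _ _ _ erf_coef_derive).
  assert (Hderiv : ex_pseries (PS_derive erf_coef) y).
  { apply ex_pseries_derive. rewrite CV_radius_erf_coef. exact I. }
  exact (is_pseries_plus _ _ _ _ _ (PSeries_correct _ _ (ex_pseries_erf_coef y))
           (is_pseries_scal 2 _ _ _ (Rmult_comm _ _)
              (is_pseries_incr_1 _ _ _ (PSeries_correct _ _ Hderiv)))).
Qed.

Lemma is_derive_erf_primitive (t : R) :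
  is_derive (fun t => t * PSeries erf_coef (t ^ 2)) t (exp (- t ^ 2)).
Proof.
  assert (Hinner : is_derive (fun t => PSeries erf_coef (t ^ 2)) t
                     (2 * t * PSeries (PS_derive erf_coef) (t ^ 2))).
  { apply (is_derive_comp (PSeries erf_coef) (fun t => t ^ 2)).
    - apply is_derive_PSeries. rewrite CV_radius_erf_coef. exact I.
    - auto_derive; [exact I | ring]. }
  rewrite <- PSeries_erf_coef_derive.
  replace (PSeries erf_coef (t ^ 2) + 2 * (t ^ 2 * PSeries (PS_derive erf_coef) (t ^ 2)))
    with (1 * PSeries erf_coef (t ^ 2) + t * (2 * t * PSeries (PS_derive erf_coef) (t ^ 2)))
    by ring.
  exact (is_derive_mult (fun t => t) _ t 1 _ (is_derive_id t) Hinner Rmult_comm).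
Qed.

Lemma erf_PSeries (x : R) : erf x = 2 / sqrt PI * (x * PSeries erf_coef (x ^ 2)).
Proof.
  unfold erf. f_equal. apply is_RInt_unique.
  replace (x * PSeries erf_coef (x ^ 2))
    with (x * PSeries erf_coef (x ^ 2) - 0 * PSeries erf_coef (0 ^ 2)) by ring.
  apply (is_RInt_derive (fun t => t * PSeries erf_coef (t ^ 2))).
  - intros t _. apply is_derive_erf_primitive.
  - intros t _. apply (ex_derive_continuous (V := R_NormedModule)).
    auto_derive. exact I.
Qed.

Definition erf_exp_coef (q0 q1 q2 : R) (n : nat) : R :=
  2 * erf_coef n
  - (q0 * exp_neg_coef n + q1 * PS_incr_1 exp_neg_coef n + q2 * PS_incr_n exp_neg_coef 2 n).

Lemma is_pseries_erf_exp_coef (q0 q1 q2 y : R) :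
  is_pseries (erf_exp_coef q0 q1 q2) y
    (2 * PSeries erf_coef y - (q0 + q1 * y + q2 * y ^ 2) * exp (- y)).
Proof.
  pose proof (is_pseries_exp_neg y) as Hexp.
  pose proof (is_pseries_minus _ _ _ _ _
    (is_pseries_scal 2 _ _ _ (Rmult_comm _ _) (PSeries_correct _ _ (ex_pseries_erf_coef y)))
    (is_pseries_plus _ _ _ _ _
       (is_pseries_plus _ _ _ _ _
          (is_pseries_scal q0 _ _ _ (Rmult_comm _ _) Hexp)
          (is_pseries_scal q1 _ _ _ (Rmult_comm _ _) (is_pseries_incr_1 _ _ _ Hexp)))
       (is_pseries_scal q2 _ _ _ (Rmult_comm _ _) (is_pseries_incr_n _ 2 _ _ Hexp))))
    as H.
  replace (2 * PSeries erf_coef y - (q0 + q1 * y + q2 * y ^ 2) * exp (- y))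
    with (2 * PSeries erf_coef y - (q0 * exp (- y) + q1 * (y * exp (- y)) + q2 * (y ^ 2 * exp (- y))))
    by ring.
  exact H.
Qed.

Lemma erf_exp_coef_0 (q0 q1 q2 : R) : erf_exp_coef q0 q1 q2 0 = 2 - q0.
Proof.
  change (2 * erf_coef 0 - (q0 * exp_neg_coef 0 + q1 * 0 + q2 * 0) = 2 - q0).
  unfold erf_coef, exp_neg_coef. simpl. field.
Qed.

Lemma erf_exp_coef_1 (q0 q1 q2 : R) : erf_exp_coef q0 q1 q2 1 = q0 - q1 - 2 / 3.
Proof.
  change (2 * erf_coef 1 - (q0 * exp_neg_coef 1 + q1 * exp_neg_coef 0 + q2 * 0) = q0 - q1 - 2 / 3).
  unfold erf_coef, exp_neg_coef. simpl. field.
Qed.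

Lemma erf_exp_coef_2 (q0 q1 q2 : R) :
  erf_exp_coef q0 q1 q2 2 = 1 / 5 - q0 / 2 + q1 - q2.
Proof.
  change (2 * erf_coef 2 - (q0 * exp_neg_coef 2 + q1 * exp_neg_coef 1 + q2 * exp_neg_coef 0)
          = 1 / 5 - q0 / 2 + q1 - q2).
  unfold erf_coef, exp_neg_coef. simpl. field.
Qed.

Lemma ex_pseries_decr_n_R (a : nat -> R) (n : nat) (x : R) :
  ex_pseries a x -> ex_pseries (PS_decr_n a n) x.
Proof.
  apply ex_pseries_decr_n.
  destruct (Req_dec x 0) as [-> | Hx]; [left; reflexivity | right].
  exists (/ x). exact (Rinv_l x Hx).
Qed.

Lemma Series_scaled_PSeries (s c : nat -> R) (K y : R) :
  ex_pseries c y -> (forall k, s k = K * (c k * y ^ k)) ->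
  ex_series s /\ Series s = K * PSeries c y.
Proof.
  intros Hc Hs. apply ex_pseries_R in Hc. split.
  - apply (ex_series_ext (fun k => K * (c k * y ^ k))); [intros k; symmetry; apply Hs|].
    exact (ex_series_scal_l K _ Hc).
  - rewrite (Series_ext _ _ Hs), Series_scal_l. reflexivity.
Qed.

Lemma erf_expansion (s : nat -> R) (K q0 q1 q2 : R) (n : nat) (x : R) :
  K <> 0 ->
  (forall k, s k = K * (PS_decr_n (erf_exp_coef q0 q1 q2) (S n) k * (x ^ 2) ^ k)) ->
  ex_series s /\
  erf x = x / sqrt PI * (sum_f_R0 (fun k => erf_exp_coef q0 q1 q2 k * (x ^ 2) ^ k) n
                         + (q0 + q1 * x ^ 2 + q2 * x ^ 4) * exp (- x ^ 2))
          + x * (x ^ 2) ^ S n / (K * sqrt PI) * Series s.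
Proof.
  intros HK Hs.
  pose proof (is_pseries_erf_exp_coef q0 q1 q2 (x ^ 2)) as Hw.
  assert (Hex : ex_pseries (erf_exp_coef q0 q1 q2) (x ^ 2)) by (eexists; exact Hw).
  destruct (Series_scaled_PSeries s _ K (x ^ 2) (ex_pseries_decr_n_R _ (S n) _ Hex) Hs)
    as [Hs_ex Hs_val].
  split; [exact Hs_ex|].
  assert (Hpi : sqrt PI <> 0) by (apply Rgt_not_eq, sqrt_lt_R0, PI_RGT_0).
  pose proof (PSeries_decr_n _ n _ Hex) as Hsplit.
  rewrite (is_pseries_unique _ _ _ Hw) in Hsplit.
  rewrite erf_PSeries, Hs_val.
  replace (PSeries erf_coef (x ^ 2))
    with ((2 * PSeries erf_coef (x ^ 2)
           - (q0 + q1 * x ^ 2 + q2 * (x ^ 2) ^ 2) * exp (- x ^ 2)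
           + (q0 + q1 * x ^ 2 + q2 * (x ^ 2) ^ 2) * exp (- x ^ 2)) / 2) by field.
  rewrite Hsplit. field. split; assumption.
Qed.

Lemma seq_snoc (m n : nat) :
  (m <= S n)%nat -> seq m (S (S n) - m) = seq m (S n - m) ++ S n :: nil.
Proof.
  intros Hm. replace (S (S n) - m)%nat with (S (S n - m)) by lia.
  rewrite seq_S. do 3 f_equal. lia.
Qed.

Lemma sumR_snoc (m n : nat) (f : nat -> R) :
  (m <= S n)%nat -> sumR m (S n) f = sumR m n f + f (S n).
Proof.
  intros Hm. unfold sumR. rewrite seq_snoc, fold_right_app by exact Hm.
  induction (seq m (S n - m)) as [|r l IH]; simpl in *; [|rewrite IH]; ring.
Qed.

Lemma prodR_snoc (m n : nat) (f : nat -> R) :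
  (m <= S n)%nat -> prodR m (S n) f = prodR m n f * f (S n).
Proof.
  intros Hm. unfold prodR. rewrite seq_snoc, fold_right_app by exact Hm.
  induction (seq m (S n - m)) as [|r l IH]; simpl in *; [|rewrite IH]; ring.
Qed.

Lemma sumR_odd (r : nat) : sumR 1 r (fun i => 2 * INR i + 1) = INR r * (INR r + 2).
Proof.
  induction r as [|r IH]; [unfold sumR; simpl; ring|].
  rewrite sumR_snoc, IH, S_INR by lia. ring.
Qed.

Lemma sumR_from_2 (r : nat) : 2 * sumR 2 (S r) (fun i => INR i) = INR r * (INR r + 3).
Proof.
  induction r as [|r IH]; [unfold sumR; simpl; ring|].
  rewrite sumR_snoc, Rmult_plus_distr_l, IH, !S_INR by lia. ring.
Qed.

Lemma prodR_sumR_odd (k : nat) :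
  prodR 1 k (fun r => sumR 1 r (fun i => 2 * INR i + 1))
  = INR (fact k) * INR (fact (S (S k))) / 2.
Proof.
  induction k as [|k IH]; [unfold prodR; simpl; field|].
  rewrite prodR_snoc, IH, sumR_odd by lia.
  rewrite !fact_simpl, !mult_INR, !S_INR. field.
Qed.

Lemma prodR_sumR_from_2 (k : nat) :
  prodR 2 (S k) (fun r => 2 * sumR 2 r (fun i => INR i))
  = INR (fact k) * INR (fact (S (S (S k)))) / 6.
Proof.
  induction k as [|k IH]; [unfold prodR, sumR; simpl; field|].
  rewrite prodR_snoc, IH, sumR_from_2 by lia.
  rewrite !fact_simpl, !mult_INR, !S_INR. field.
Qed.

Lemma erf_exp_coef_SS (q0 q1 q2 : R) (n : nat) :
  erf_exp_coef q0 q1 q2 (S (S n))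
  = 2 * erf_coef (S (S n))
    - (q0 * exp_neg_coef (S (S n)) + q1 * exp_neg_coef (S n) + q2 * exp_neg_coef n).
Proof. reflexivity. Qed.

Lemma erf_series1_coef (x : R) (k : nat) :
  erf_series1 x k = 1 * (PS_decr_n (erf_exp_coef 1 0 0) 1 k * (x ^ 2) ^ k).
Proof.
  change (erf_series1 x k
          = 1 * ((2 * erf_coef (S k) - (1 * exp_neg_coef (S k) + 0 * PS_incr_1 exp_neg_coef (S k)
                                        + 0 * PS_incr_n exp_neg_coef 2 (S k))) * (x ^ 2) ^ k)).
  pose proof (pos_INR k). pose proof (INR_fact_neq_0 k).
  unfold erf_series1, erf_coef, exp_neg_coef.
  rewrite pow_mult, Nat.add_1_r, fact_simpl, mult_INR, !S_INR.
  simpl pow. field. lra.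
Qed.

Lemma erf_series2_coef (x : R) (k : nat) :
  erf_series2 x k = 6 * (PS_decr_n (erf_exp_coef 1 (1 / 3) 0) 2 k * (x ^ 2) ^ k).
Proof.
  pose proof (pos_INR k). pose proof (INR_fact_neq_0 k).
  unfold erf_series2, PS_decr_n. rewrite prodR_sumR_odd.
  simpl (2 + k)%nat. rewrite erf_exp_coef_SS.
  unfold erf_coef, exp_neg_coef.
  rewrite pow_mult, Nat.add_1_r, !fact_simpl, !mult_INR, !S_INR.
  simpl pow. field. lra.
Qed.

Lemma erf_series3_coef (x : R) (k : nat) :
  erf_series3 x k = 60 * (PS_decr_n (erf_exp_coef 1 (11 / 30) (1 / 15)) 3 k * (x ^ 2) ^ k).
Proof.
  pose proof (pos_INR k). pose proof (INR_fact_neq_0 k).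
  unfold erf_series3, PS_decr_n. rewrite Nat.add_1_r, prodR_sumR_from_2.
  simpl (3 + k)%nat. rewrite erf_exp_coef_SS.
  unfold erf_coef, exp_neg_coef.
  rewrite pow_mult, !fact_simpl, !mult_INR, !S_INR.
  simpl pow. field. lra.
Qed.

Theorem theorem7p2 : forall x : R,
  (ex_series (erf_series1 x) /\
   erf x = x / sqrt PI + x / sqrt PI * exp (- x ^ 2)
           + x ^ 3 / sqrt PI * Series (erf_series1 x)) /\
  (ex_series (erf_series2 x) /\
   erf x = x / sqrt PI + x / sqrt PI * (1 + x ^ 2 / 3) * exp (- x ^ 2)
           + x ^ 5 / (6 * sqrt PI) * Series (erf_series2 x)) /\
  (ex_series (erf_series3 x) /\
   erf x = x / sqrt PI * (1 - x ^ 2 / 30)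
           + x / sqrt PI * (1 + 11 * x ^ 2 / 30 + x ^ 4 / 15) * exp (- x ^ 2)
           + x ^ 7 / (60 * sqrt PI) * Series (erf_series3 x)).
Proof.
  intros x.
  assert (Hpi : sqrt PI <> 0) by (apply Rgt_not_eq, sqrt_lt_R0, PI_RGT_0).
  destruct (erf_expansion _ 1 1 0 0 0 x ltac:(lra) (erf_series1_coef x)) as [Hex1 Herf1].
  destruct (erf_expansion _ 6 1 (1 / 3) 0 1 x ltac:(lra) (erf_series2_coef x)) as [Hex2 Herf2].
  destruct (erf_expansion _ 60 1 (11 / 30) (1 / 15) 2 x ltac:(lra) (erf_series3_coef x))
    as [Hex3 Herf3].
  simpl sum_f_R0 in Herf1, Herf2, Herf3.
  rewrite erf_exp_coef_0 in Herf1, Herf2, Herf3.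
  rewrite erf_exp_coef_1 in Herf2, Herf3.
  rewrite erf_exp_coef_2 in Herf3.
  split; [|split]; split; try assumption.
  - rewrite Herf1. field. exact Hpi.
  - rewrite Herf2. field. exact Hpi.
  - rewrite Herf3. field. exact Hpi.
Qed.
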